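(* Let $R$ be an integral domain with field of fractions $K$. If $d_1,\dots,d_n$ ($n\ge1$) are nonzero derivations on $R$ and $D=d_1\circ\cdots\circ d_n$, then $D/j$ (i.e. $x\mapsto D(x)/x$), as a map from the semigroup $R^*$ to $K$, is a generalized polynomial of degree at most $n$. If $R$ has characteristic zero, then $D/j$ has degree exactly $n$.
   Context: Rings are commutative with unit. A derivation on $R$ is a map $d\colon R\to R$ with $d(x+y)=d(x)+d(y)$ and $d(xy)=d(x)y+d(y)x$. $R^*$ is the abelian semigroup $R\setminus\{0\}$ under multiplication; $j$ is the identity map. For $f$ from an abelian semigroup $G$ to an abelian group, $\Delta_g f(x)=f(x\cdot g)-f(x)$ (using $G$'s operation); $f$ is a generalized polynomial if for some $k$, $\Delta_{g_1}\cdots\Delta_{g_{k+1}}f=0$ for all $g_i\in G$; its degree is the least such $k$ (the zero function has degree $-1$). *)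

From HB Require Import structures.
From mathcomp Require Import all_boot all_order all_algebra fraction.
Set Implicit Arguments. Unset Strict Implicit. Unset Printing Implicit Defensive.
Import Order.TTheory GRing.Theory Num.Theory.
Local Open Scope ring_scope.

Definition Delta (G : Type) (A : zmodType) (op : G -> G -> G) (g : G)
  (f : G -> A) : G -> A := fun x => f (op x g) - f x.

Definition iterDelta (G : Type) (A : zmodType) (op : G -> G -> G)
  (gs : seq G) (f : G -> A) : G -> A := foldr (Delta op) f gs.

Definition gpoly_deg_le (G : Type) (A : zmodType) (op : G -> G -> G)
  (f : G -> A) (k : nat) : Prop :=
  forall gs : seq G, size gs = k.+1 -> forall x : G, iterDelta op gs f x = 0.

(* f is a generalized polynomial of degree exactly n (n >= 0): degree <= n
   and not degree <= n-1 (for n = 0, "degree <= -1" means f is zero). *)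
Definition gpoly_deg_eq (G : Type) (A : zmodType) (op : G -> G -> G)
  (f : G -> A) (n : nat) : Prop :=
  gpoly_deg_le op f n /\
  ~ (if n is m.+1 then gpoly_deg_le op f m else forall x, f x = 0).

Definition nzR (R : idomainType) := {x : R | x != 0}.
Definition nzmul (R : idomainType) (x y : nzR R) : nzR R :=
  exist _ (sval x * sval y) (mulf_neq0 (svalP x) (svalP y)).

Definition is_derivation (R : comPzRingType) (d : R -> R) : Prop :=
  (forall x y, d (x + y) = d x + d y) /\
  (forall x y, d (x * y) = d x * y + d y * x).

Definition comp_list (R : Type) (ds : seq (R -> R)) : R -> R :=
  foldr (fun d acc => d \o acc) id ds.

Definition divj (R : idomainType) (D : R -> R) : nzR R -> {fraction R} :=
  fun x => tofrac (D (sval x)) / tofrac (sval x).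

From HB Require Import structures.
From mathcomp Require Import all_boot all_order all_algebra fraction.
From Stdlib Require Import Classical.
Import Order.TTheory GRing.Theory Num.Theory.
Set Implicit Arguments. Unset Strict Implicit. Unset Printing Implicit Defensive.
Local Open Scope ring_scope.

(* Write D_s for the composite of the derivations indexed by s.  The Leibniz rule
   D_s(xg) = sum over the splittings of s into complementary subsequences A, B of
   D_A(x) D_B(g) gives Delta_g (D_s/j) = sum_(B <> [::]) (D_B(g)/g) (D_A/j): a linear
   combination of quotients of strictly shorter composites, so the degree is at
   most |s| by induction.  Only the splittings with |B| = 1 survive |s| - 1
   further differences, whence Delta_g^|s| (D_s/j) = |s|! prod_i d_i(g)/g.  In
   characteristic 0 this is nonzero for g outside every ker d_i, and such g exist:
   if a avoids all but one kernel and b avoids the last, then a + t b avoids all of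
   them for all but finitely many integers t. *)

Section GeneralizedPolynomials.
Variables (G : Type) (A : zmodType) (op : G -> G -> G).

(* [gpoly_deg_le op f k] is convertible to [gpoly_deg_lt f k.+1]. *)
Definition gpoly_deg_lt (f : G -> A) (k : nat) : Prop :=
  forall gs : seq G, size gs = k -> forall x, iterDelta op gs f x = 0.

Lemma iterDelta_rcons gs g (f : G -> A) :
  iterDelta op (rcons gs g) f = iterDelta op gs (Delta op g f).
Proof. by rewrite /iterDelta foldr_rcons. Qed.

Lemma eq_iterDelta gs (f h : G -> A) : f =1 h -> iterDelta op gs f =1 iterDelta op gs h.
Proof. by move=> fh; elim: gs => [|g gs IH] x //=; rewrite /Delta !IH. Qed.

Lemma gpoly_deg_ltS (f : G -> A) k :
  (forall g, gpoly_deg_lt (Delta op g f) k) -> gpoly_deg_lt f k.+1.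
Proof.
move=> Df_lt; case/lastP => [|gs g] //; rewrite size_rcons => -[gs_k] x.
by rewrite iterDelta_rcons Df_lt.
Qed.

Lemma gpoly_deg_lt_leq (f : G -> A) k m :
  (k <= m)%N -> gpoly_deg_lt f k -> gpoly_deg_lt f m.
Proof.
move=> /subnK <-; elim: (m - k)%N => [|n IH] // f_lt [|g gs] //= [gs_nk] x.
by rewrite /Delta !IH ?subrr.
Qed.

Lemma gpoly_deg_eq_lt (f : G -> A) n :
  gpoly_deg_lt f n.+1 -> ~ gpoly_deg_lt f n -> gpoly_deg_eq op f n.
Proof.
move=> f_lt f_nlt; split=> //; case: n f_lt f_nlt => [|n] _ // f_nlt f0.
by apply: f_nlt => -[].
Qed.

End GeneralizedPolynomials.

Lemma iterDelta_sum (G : Type) (A : pzRingType) (op : G -> G -> G) gs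
    (I : Type) (s : seq I) (P : pred I) (c : I -> A) (h : I -> G -> A) x :
  iterDelta op gs (fun y => \sum_(i <- s | P i) c i * h i y) x =
  \sum_(i <- s | P i) c i * iterDelta op gs (h i) x.
Proof.
elim: gs x => [|g gs IH] x //=.
by rewrite /Delta !IH -sumrB; apply: eq_bigr => i _; rewrite mulrBr.
Qed.

Section Splits.
Variable I : eqType.

Fixpoint splits (s : seq I) : seq (seq I * seq I) :=
  if s is i :: s' then
    [seq (i :: p.1, p.2) | p <- splits s'] ++ [seq (p.1, i :: p.2) | p <- splits s']
  else [:: ([::], [::])].

Lemma splits_cons i s :
  splits (i :: s) =
  [seq (i :: p.1, p.2) | p <- splits s] ++ [seq (p.1, i :: p.2) | p <- splits s].
Proof. by []. Qed.

Lemma perm_splits s p : p \in splits s -> perm_eq (p.1 ++ p.2) s.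
Proof.
elim: s p => [|i s IH] p /=; first by rewrite inE => /eqP ->.
rewrite mem_cat => /orP[] /mapP[q q_in ->] /=; first by rewrite perm_cons IH.
by rewrite -cat1s perm_catCA perm_cons IH.
Qed.

Lemma size_splits s p : p \in splits s -> (size p.1 + size p.2)%N = size s.
Proof. by move/perm_splits/perm_size; rewrite size_cat. Qed.

Lemma filter_splits_nil s : [seq p <- splits s | nilp p.2] = [:: (s, [::])].
Proof.
elim: s => [|i s IH] //=.
by rewrite filter_cat !filter_map IH (@eq_filter _ _ pred0) ?filter_pred0.
Qed.

Lemma count_splits_size1 s : count (fun p => size p.2 == 1)%N (splits s) = size s.
Proof.
elim: s => [|i s IH] //=; rewrite count_cat !count_map IH.
rewrite (@eq_count _ _ (fun p => nilp p.2)); last by case=> ? [].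
by rewrite -size_filter filter_splits_nil addn1.
Qed.

End Splits.

Section AdditiveMaps.
Variables (R : zmodType) (f : R -> R).
Hypothesis fD : {morph f : x y / x + y}.

Lemma additive0 : f 0 = 0.
Proof. by apply: (@addrI _ (f 0)); rewrite -fD !addr0. Qed.

Lemma additive_sum (J : Type) (s : seq J) (F : J -> R) :
  f (\sum_(j <- s) F j) = \sum_(j <- s) f (F j).
Proof. by elim: s => [|j s IH]; rewrite ?big_nil ?additive0 // !big_cons fD IH. Qed.

Lemma additiveMn x n : f (x *+ n) = f x *+ n.
Proof. by elim: n => [|n IH]; rewrite ?mulr0n ?additive0 // !mulrS fD IH. Qed.

End AdditiveMaps.

Section CharacteristicZero.
Variable R : idomainType.
Hypothesis char0 : [pchar R] =i pred0.

Lemma pchar0_natr_inj : injective (fun n : nat => n%:R : R).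
Proof.
suff le_inj m n : (m <= n)%N -> m%:R = n%:R :> R -> m = n.
  by move=> m n; case: (leqP m n) => [/le_inj//|/ltnW/le_inj h /esym/h].
move=> le_mn; rewrite -(subnK le_mn) natrD -{1}[m%:R]add0r => /addIr/esym/eqP.
by rewrite (pcharf0P _).1 // => /eqP->.
Qed.

Lemma poly_nonroot_nat (p : {poly R}) : p != 0 -> exists n : nat, ~~ root p n%:R.
Proof.
move=> p_neq0; pose rs := [seq n%:R : R | n <- iota 0 (size p)].
have /allPn[_ /mapP[n _ ->] nroot] : ~~ all (root p) rs.
  apply: contraTN (leqnn (size p)) => rootsP; rewrite -ltnNge.
  by rewrite -[X in (X < _)%N](size_iota 0) -(size_map (fun n => n%:R : R))
    max_poly_roots // map_inj_uniq ?iota_uniq //; exact: pchar0_natr_inj.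
by exists n.
Qed.

Lemma linear_poly_neq0 (a b : R) : (a != 0) || (b != 0) -> a%:P + b *: 'X != 0.
Proof.
apply: contraTT => /negPn/eqP ab0; rewrite negb_or !negbK.
have := congr1 (fun q : {poly R} => (q`_0, q`_1)) ab0.
by rewrite !coefE /= mulr0 mulr1 addr0 add0r => -[-> ->]; rewrite eqxx.
Qed.

Lemma exists_common_nonzero (I : eqType) (f : I -> R -> R) (s : seq I) :
  (forall i, {morph f i : x y / x + y}) -> (forall i, exists x, f i x != 0) ->
  exists2 g : R, g != 0 & all (fun i => f i g != 0) s.
Proof.
move=> fD f_nz; elim: s => [|i s [a _ /allP a_nz]]; first by exists 1; rewrite ?oner_neq0.
have [b b_nz] := f_nz i.
pose P := \prod_(j <- i :: s) ((f j a)%:P + (f j b) *: 'X).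
have [|t] := @poly_nonroot_nat P.
  rewrite prodf_seq_neq0; apply/allP => j /=; rewrite inE.
  case: eqP => [-> _|_ /a_nz j_nz]; apply: linear_poly_neq0; first by rewrite b_nz orbT.
  by rewrite j_nz.
rewrite /root horner_prod prodf_seq_neq0 => /allP P_nz.
have fg_nz j : j \in i :: s -> f j (a + b *+ t) != 0.
  by move=> /P_nz /=; rewrite !hornerE mulr_natr fD (additiveMn (fD j)).
exists (a + b *+ t); last by apply/allP.
by apply: contraTneq (fg_nz i (mem_head _ _)) => ->; rewrite additive0 ?eqxx.
Qed.

End CharacteristicZero.

Section DerivationQuotients.
Variables (R : idomainType) (I : eqType) (dd : I -> R -> R).
Hypothesis dd_der : forall i, is_derivation (dd i).

Definition dcomp (s : seq I) : R -> R := comp_list (map dd s).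

Definition dquo (s : seq I) : nzR R -> {fraction R} := divj (dcomp s).

Lemma dcomp_cons i s x : dcomp (i :: s) x = dd i (dcomp s x).
Proof. by []. Qed.

Lemma dcompM s x y :
  dcomp s (x * y) = \sum_(p <- splits s) dcomp p.1 x * dcomp p.2 y.
Proof.
elim: s => [|i s IH]; first by rewrite big_seq1.
have [ddiD ddiM] := dd_der i.
rewrite splits_cons big_cat /= !big_map -big_split /= !dcomp_cons IH (additive_sum ddiD).
by apply: eq_bigr => p _; rewrite ddiM [X in _ + X]mulrC.
Qed.

Lemma dquo_nil g : dquo [::] g = 1.
Proof. by rewrite /dquo /divj divff // tofrac_eq0; case: g. Qed.

Lemma dquoM s x g :
  dquo s (nzmul x g) = \sum_(p <- splits s) dquo p.1 x * dquo p.2 g.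
Proof.
rewrite /dquo /divj /= dcompM tofracM rmorph_sum mulr_suml.
by apply: eq_bigr => p _; rewrite rmorphM mulf_div.
Qed.

Lemma Delta_dquo s g x :
  Delta (@nzmul R) g (dquo s) x =
  \sum_(p <- splits s | ~~ nilp p.2) dquo p.2 g * dquo p.1 x.
Proof.
rewrite /Delta dquoM (bigID (fun p => nilp p.2)) /= -big_filter filter_splits_nil.
rewrite big_seq1 dquo_nil mulr1 addrC addrK.
by apply: eq_bigr => p _; rewrite mulrC.
Qed.

Lemma dquo_deg_lt s : gpoly_deg_lt (@nzmul R) (dquo s) (size s).+1.
Proof.
have [n] := ubnP (size s); elim: n s => // n IH s /ltnSE s_le.
apply: gpoly_deg_ltS => g gs gs_s x.
rewrite (eq_iterDelta _ _ (Delta_dquo s g)) iterDelta_sum big1_seq // => p.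
case/andP=> p2_nnil p_in; have p_sz := size_splits p_in.
have p1_lt : (size p.1 < size s)%N by rewrite -p_sz -[X in (X < _)%N]addn0 ltn_add2l lt0n.
by rewrite (gpoly_deg_lt_leq p1_lt (IH _ (leq_trans p1_lt s_le))) ?mulr0.
Qed.

Lemma iterDelta_nseq_dquo s g x :
  iterDelta (@nzmul R) (nseq (size s) g) (dquo s) x =
  (size s)`!%:R * \prod_(i <- s) dquo [:: i] g.
Proof.
have [n] := ubnP (size s); elim: n s x => // n IH s x /ltnSE s_le.
case s_sz: (size s) => [|m]; first by rewrite (size0nil s_sz) /= dquo_nil big_nil mulr1.
rewrite -addn1 nseqD cats1 iterDelta_rcons (eq_iterDelta _ _ (Delta_dquo s g)).
rewrite iterDelta_sum (bigID (fun p => size p.2 == 1)%N) /=.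
rewrite [X in _ + X]big1_seq ?addr0 => [|p /andP[/andP[p2_nnil p2_sz] p_in]]; last first.
  have p1_lt : (size p.1 < m)%N.
    by rewrite -ltnS -s_sz -(size_splits p_in) -addn2 leq_add2l ltn_neqAle eq_sym p2_sz lt0n.
  by rewrite (gpoly_deg_lt_leq p1_lt (@dquo_deg_lt p.1)) ?size_nseq ?mulr0.
rewrite [LHS]big_seq_cond (eq_bigr (fun => m`!%:R * \prod_(i <- s) dquo [:: i] g)).
  rewrite -[LHS]big_seq_cond big_const_seq iter_addr_0.
  rewrite (@eq_count _ _ (fun p => size p.2 == 1)%N) => [|[? [|? []]] //].
  by rewrite count_splits_size1 s_sz addn1 factS natrM -mulrA !mulr_natl.
move=> [p1 [|i [|? ?]]] /andP[p_in] //= _.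
have p1_sz : size p1 = m by have := size_splits p_in; rewrite s_sz addn1 => -[].
rewrite -p1_sz IH ?p1_sz -?s_sz // -(perm_big _ (perm_splits p_in)) big_cat big_seq1 /=.
by rewrite mulrCA [_ * dquo _ _]mulrC.
Qed.

Lemma dquo_deg_ge s (g : nzR R) :
  [pchar R] =i pred0 -> all (fun i => dd i (sval g) != 0) s ->
  ~ gpoly_deg_lt (@nzmul R) (dquo s) (size s).
Proof.
move=> char0 g_nz /(_ _ (size_nseq (size s) g) g) /eqP.
apply/negP; rewrite iterDelta_nseq_dquo mulf_neq0 //.
  by rewrite -(rmorph_nat (@tofrac R)) tofrac_eq0 (pcharf0P _).1 // -lt0n fact_gt0.
rewrite prodf_seq_neq0; apply/allP => i /(allP g_nz) ddi_nz /=.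
by rewrite /dquo /divj mulf_neq0 ?invr_eq0 ?tofrac_eq0 //; case: g {g_nz} ddi_nz.
Qed.

End DerivationQuotients.

Theorem lemma2p4 (R : idomainType) (ds : seq (R -> R)) :
  (0 < size ds)%N ->
  (forall i : 'I_(size ds), is_derivation (nth id ds i) /\ ~ (forall x, nth id ds i x = 0)) ->
  gpoly_deg_le (@nzmul R) (divj (comp_list ds)) (size ds) /\
  ([pchar R] =i pred0 ->
     gpoly_deg_eq (@nzmul R) (divj (comp_list ds)) (size ds)).
Proof.
move=> _ ds_ok; pose dd (i : 'I_(size ds)) := nth id ds i.
pose s := enum 'I_(size ds).
have dd_der i : is_derivation (dd i) := (ds_ok i).1.
have -> : divj (comp_list ds) = dquo dd s.
  by rewrite /dquo /dcomp map_comp val_enum_ord -/(mkseq _ _) mkseq_nth.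
have s_sz : size s = size ds := size_enum_ord _.
have deg_le : gpoly_deg_le (@nzmul R) (dquo dd s) (size ds).
  by move: (dquo_deg_lt dd_der (s := s)); rewrite s_sz.
split=> // char0; apply: gpoly_deg_eq_lt => //.
have dd_nz i : exists x, dd i x != 0.
  by have [x /eqP] := not_all_ex_not _ _ (ds_ok i).2; exists x.
have [g g_nz g_common] := exists_common_nonzero char0 s (fun i => (dd_der i).1) dd_nz.
by move: (dquo_deg_ge dd_der (g := exist _ g g_nz) char0 g_common); rewrite s_sz.
Qed.
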